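(* Let $\Gamma$ be a totally ordered set, $\sigma:\Gamma\to\Gamma$ an order-preserving embedding with $\sigma(\gamma)<\gamma$ for all $\gamma$, and $(\mathbf k,\log)$ an ordered field with surjective logarithm. Let $G=\Gamma^{\mathbf k}$ with prelogarithmic section $l_\sigma$, and define $\psi_\sigma:G\to G$ by $\psi_\sigma(\prod_\gamma x_\gamma^{g(\gamma)})=\prod_\gamma x_{\sigma(\gamma)}^{g(\gamma)}$. Then $\psi_\sigma$ is a contracting morphism of $(\mathbf k((G)),l_\sigma)$ to itself, and the induced map $\psi_\sigma^{EL}$ on $\mathbf k((\Gamma^{\mathbf k}))^{\sigma EL}$ is a surjective contraction (surjective even if $\sigma$ is not).
   Context: Let $\mathbf k$ be an ordered field and $(G,\cdot,<)$ a totally ordered abelian group. $\mathbf k((G))$ denotes the field of generalized power series $\alpha=\sum_{g\in G}\alpha(g)\,g$ with anti-well-ordered support, usual operations, canonical valuation $v(\alpha)=\max\operatorname{supp}\alpha$ and ordering $\alpha>0$ iff $\alpha(v(\alpha))>0$. $\mathbf k((S))=\{\alpha:\operatorname{supp}\alpha\subseteq S\}$, $G^{>1}=\{g>1\}$. Hahn group: $\Gamma^{\mathbf k}$ is the set of formal products $g=\prod_{\gamma\in\Gamma}x_\gamma^{g(\gamma)}$, $g(\gamma)\in\mathbf k$, with anti-well-ordered support in $\Gamma$, multiplied pointwise, ordered by $g>1$ iff $g(\max\operatorname{supp}g)>0$. The prelogarithmic section $l_\sigma(\prod x_\gamma^{g(\gamma)})=\sum_\gamma g(\gamma)\,x_{\sigma(\gamma)}$.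 A prelogarithmic section is an order-preserving group embedding $l:(G,\cdot)\to(\mathbf k((G^{>1})),+)$. Exponential extension: $G^\#$ is the ordered abelian group of formal symbols $e(\alpha)$, $\alpha\in\mathbf k((G^{>1}))$, with $e(\alpha)e(\beta)=e(\alpha+\beta)$, $e(\alpha)<e(\beta)\iff\alpha<\beta$, and $e(l(g))$ identified with $g\in G$; $l^\#(e(\alpha))=\alpha$ is a prelogarithmic section extending $l$. Iterating gives $G^{\#n}$, $l^{\#n}$; $\mathbf k((G))^{EL}=\bigcup_n\mathbf k((G^{\#n}))$, $G^{EL}=\bigcup_nG^{\#n}$. For $(G,l)=(\Gamma^{\mathbf k},l_\sigma)$ the field is denoted $\mathbf k((\Gamma^{\mathbf k}))^{\sigma EL}$. An order-preserving group embedding $\psi:G\to G$, extended to $\mathbf k((G))$ by $\psi(\sum a_gg)=\sum a_g\psi(g)$, is a morphism of $(\mathbf k((G)),l)$ to itself if $\psi\circ l=l\circ\psi$ on $G$; it induces $\psi^\#=(l^\#)^{-1}\circ\psi\circ l^\#$ on $G^\#$, iterates $\psi^{\#n}$, and $\psi^{EL}=\bigcup_n\psi^{\#n}$. $\psi$ is contracting if $\psi(g)<g$ for all $g\in G^{>1}$; $\psi^{EL}$ is a contraction if $\psi^{EL}(g)<g$ for all $g\in G^{EL}$ with $g>1$. *)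

From HB Require Import structures.
From mathcomp Require Import all_boot all_order all_algebra.
From Stdlib Require Import ClassicalEpsilon.
Unset Printing Implicit Defensive.
Import Order.TTheory GRing.Theory Num.Theory.
Local Open Scope ring_scope.

(* push f a : the series  sum_x a(x) f(x)  (f injective in all uses):
   (push f a)(b) = a(x) if b = f x, and 0 if b is not in the image of f. *)
Definition push {k : realFieldType} {A B : Type} (f : A -> B) (a : A -> k) : B -> k :=
  fun b => match excluded_middle_informative (exists x, f x = b) with
           | left H => a (proj1_sig (constructive_indefinite_description _ H))
           | right _ => 0
           end.

Definition supp {k : realFieldType} {X : Type} (a : X -> k) : X -> Prop :=
  fun x => a x <> 0.

Definition anti_wo {X : Type} (lt : X -> X -> Prop) (S : X -> Prop) : Prop :=
  forall A : X -> Prop, (forall x, A x -> S x) -> (exists x, A x) ->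
    exists m, A m /\ forall x, A x -> ~ lt m x.

Definition hahn_in {k : realFieldType} {X : Type} (lt : X -> X -> Prop)
  (S : X -> Prop) (a : X -> k) : Prop :=
  anti_wo lt (supp a) /\ forall x, supp a x -> S x.

Definition is_val {k : realFieldType} {X : Type} (lt : X -> X -> Prop)
  (a : X -> k) (x : X) : Prop :=
  a x <> 0 /\ forall y, a y <> 0 -> ~ lt x y.

Definition hpos {k : realFieldType} {X : Type} (lt : X -> X -> Prop) (a : X -> k) : Prop :=
  exists x, is_val lt a x /\ 0 < a x.

Definition hlt {k : realFieldType} {X : Type} (lt : X -> X -> Prop) (a b : X -> k) : Prop :=
  hpos lt (fun x => b x - a x).

(* Carriers of the tower: G^{#0} = Gamma^k is represented by exponent
   functions Gamma -> k; G^{#(n+1)} = { e(alpha) | alpha in k((G^{#n, >1})) }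
   is represented by the series alpha : G^{#n} -> k.  The embedding
   G^{#n} -> G^{#(n+1)}, g |-> e(l^{#n}(g)), is l_n below. *)
Fixpoint T (k : realFieldType) (Gam : Type) (n : nat) : Type :=
  match n with
  | 0 => Gam -> k
  | S n => T k Gam n -> k
  end.

Definition xmon {k : realFieldType} {Gam : eqType} (delta : Gam) : Gam -> k :=
  fun g => if g == delta then 1 else 0.

(* l_sigma (prod x_g^{a(g)}) = sum a(g) x_{sigma g} *)
Definition lsig {k : realFieldType} {Gam : eqType} (sigma : Gam -> Gam)
  (a : Gam -> k) : (Gam -> k) -> k :=
  push (fun g => xmon (k:=k) (sigma g)) a.

Fixpoint one_n (k : realFieldType) (Gam : Type) (n : nat) : T k Gam n :=
  match n return T k Gam n with
  | 0 => fun _ => 0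
  | S n => fun _ => 0
  end.

(* group law of G^{#n}: pointwise addition of exponents / e(a)e(b)=e(a+b) *)
Fixpoint mul_n (k : realFieldType) (Gam : Type) (n : nat) : T k Gam n -> T k Gam n -> T k Gam n :=
  match n return T k Gam n -> T k Gam n -> T k Gam n with
  | 0 => fun a b x => a x + b x
  | S n => fun a b x => a x + b x
  end.

Fixpoint lt_n (k : realFieldType) {d} (Gam : orderType d) (n : nat) :
  T k Gam n -> T k Gam n -> Prop :=
  match n return T k Gam n -> T k Gam n -> Prop with
  | 0 => hlt (fun a b : Gam => (a < b)%O)
  | S n => hlt (lt_n k Gam n)
  end.

Fixpoint mem_n (k : realFieldType) {d} (Gam : orderType d) (n : nat) : T k Gam n -> Prop :=
  match n return T k Gam n -> Prop with
  | 0 => hahn_in (fun a b : Gam => (a < b)%O) (fun _ => True)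
  | S n => hahn_in (lt_n k Gam n)
             (fun t => mem_n k Gam n t /\ lt_n k Gam n (one_n k Gam n) t)
  end.

Fixpoint l_n (k : realFieldType) {d} (Gam : orderType d) (sigma : Gam -> Gam) (n : nat) :
  T k Gam n -> T k Gam (S n) :=
  match n return T k Gam n -> T k Gam (S n) with
  | 0 => lsig sigma
  | S n => push (l_n k Gam sigma n)
  end.

Fixpoint psi_n (k : realFieldType) {d} (Gam : orderType d) (sigma : Gam -> Gam) (n : nat) :
  T k Gam n -> T k Gam n :=
  match n return T k Gam n -> T k Gam n with
  | 0 => push sigma
  | S n => push (psi_n k Gam sigma n)
  end.

Fixpoint emb (k : realFieldType) {d} (Gam : orderType d) (sigma : Gam -> Gam) (n j : nat) :
  T k Gam n -> T k Gam (Nat.add j n) :=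
  match j return T k Gam n -> T k Gam (Nat.add j n) with
  | 0 => fun t => t
  | S j => fun t => l_n k Gam sigma (Nat.add j n) (emb k Gam sigma n j t)
  end.

(* Every map of the tower (psi_sigma^{#n}, the embeddings G^{#n} -> G^{#(n+1)},
   and an auxiliary "preimage" map) is a pushforward of series along an
   injective map [push f].
   Surjectivity: for the maps pre_0 := push (g |-> x_g) and
   pre_(n+1) := push pre_n, one has psi^{#(n+1)} o pre_n = l^{#n}, so every a in k((G^{#n})) is
   the image of push(pre_n) a in k((G^{#(n+1)})). *)
From HB Require Import structures.
From mathcomp Require Import all_boot all_order all_algebra.
From mathcomp Require Import lra.
From Stdlib Require Import Classical FunctionalExtensionality ClassicalEpsilon.
Import Order.TTheory GRing.Theory Num.Theory.
Local Open Scope ring_scope.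

Section Pushforward.
Context {k : realFieldType}.

Lemma pushE {A B : Type} (f : A -> B) (a : A -> k) x :
  injective f -> push f a (f x) = a x.
Proof.
move=> f_inj; rewrite /push; case: excluded_middle_informative => [H|H]; last first.
  by exfalso; apply: H; exists x.
by case: (constructive_indefinite_description _ H) => y /= /f_inj ->.
Qed.

Lemma push_out {A B : Type} (f : A -> B) (a : A -> k) b :
  ~ (exists x, f x = b) -> push f a b = 0.
Proof. by move=> H; rewrite /push; case: excluded_middle_informative. Qed.

Lemma push_nz {A B : Type} {f : A -> B} {a : A -> k} {b} :
  push f a b <> 0 -> exists x, f x = b /\ a x <> 0.
Proof.
rewrite /push; case: excluded_middle_informative => [H|//].
by case: (constructive_indefinite_description _ H) => y Hy /= nz; exists y.
Qed.

(* [push f] is additive: this is the group-morphism property of psi. *)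
Lemma push_add {A B : Type} (f : A -> B) (a b : A -> k) :
  push f (fun x => a x + b x) = fun y => push f a y + push f b y.
Proof.
apply: functional_extensionality => y; rewrite /push.
by case: excluded_middle_informative => //= _; rewrite addr0.
Qed.

Lemma push_sub {A B : Type} (f : A -> B) (a b : A -> k) :
  push f (fun x => b x - a x) = fun y => push f b y - push f a y.
Proof.
apply: functional_extensionality => y; rewrite /push.
by case: excluded_middle_informative => //= _; rewrite subr0.
Qed.

Lemma push_zero {A B : Type} (f : A -> B) :
  push f (fun _ => (0 : k)) = fun _ => 0.
Proof.
by apply: functional_extensionality => y; rewrite /push; case: excluded_middle_informative.
Qed.

Lemma push_inj {A B : Type} (f : A -> B) :
  injective f -> injective (push f : (A -> k) -> (B -> k)).
Proof.
move=> f_inj a b eq_ab; apply: functional_extensionality => x.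
by rewrite -(pushE f a x f_inj) -(pushE f b x f_inj) eq_ab.
Qed.

Lemma push_comp {A B C : Type} (f : B -> C) (g : A -> B) (a : A -> k) :
  injective f -> injective g -> push f (push g a) = push (fun x => f (g x)) a.
Proof.
move=> f_inj g_inj; have fg_inj : injective (fun x => f (g x)) by move=> u v /f_inj/g_inj.
apply: functional_extensionality => c.
case: (classic (exists x, f (g x) = c)) => [[x <-]|not_fg].
  by rewrite (pushE _ _ _ f_inj) (pushE _ _ _ g_inj) (pushE _ _ _ fg_inj).
rewrite (push_out _ _ _ not_fg).
case: (classic (exists y, f y = c)) => [[y fy]|not_f]; last by rewrite push_out.
rewrite -fy (pushE _ _ _ f_inj) push_out // => [[x gx]]; apply: not_fg; exists x.
by rewrite gx.
Qed.

Lemma push_xmon {A : eqType} (f : A -> A) (g : A) :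
  injective f -> push f (@xmon k A g) = xmon (f g).
Proof.
move=> f_inj; apply: functional_extensionality => b.
case: (classic (exists y, f y = b)) => [[y <-]|not_f].
  by rewrite (pushE _ _ _ f_inj) /xmon (inj_eq f_inj).
rewrite push_out // /xmon; case: eqP => // fg; exfalso; apply: not_f; exists g.
by rewrite fg.
Qed.

End Pushforward.

Definition sto {X : Type} (lt : X -> X -> Prop) (M : X -> Prop) :=
  [/\ forall x, ~ lt x x,
      forall x y z, M x -> M y -> M z -> lt x y -> lt y z -> lt x z &
      forall x y, M x -> M y -> [\/ x = y, lt x y | lt y x]].

Definition order_embedding {X Y : Type} (ltX : X -> X -> Prop) (ltY : Y -> Y -> Prop)
  (M : X -> Prop) (M' : Y -> Prop) (f : X -> Y) :=
  [/\ injective f, forall x, M x -> M' (f x) &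
      forall x y, M x -> M y -> ltX x y -> ltY (f x) (f y)].

Definition reflects {X Y : Type} (ltX : X -> X -> Prop) (ltY : Y -> Y -> Prop)
  (f : X -> Y) (M : X -> Prop) :=
  forall x y, M x -> M y -> ltY (f x) (f y) -> ltX x y.

Lemma embedding_reflects {X Y : Type} {ltX : X -> X -> Prop} {ltY : Y -> Y -> Prop}
  {M M'} {f : X -> Y} :
  sto ltX M -> sto ltY M' -> order_embedding ltX ltY M M' f -> reflects ltX ltY f M.
Proof.
move=> [_ _ tri] [irr' tr' _] [_ fM mono] x y Mx My lt_fxy.
case: (tri x y Mx My) => [eq_xy|//|lt_yx]; exfalso.
  by subst y; exact: (irr' _ lt_fxy).
by apply: (irr' (f x)); apply: (tr' _ _ _ (fM _ Mx) (fM _ My) (fM _ Mx) lt_fxy); exact: mono.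
Qed.

Section HahnOrder.
Context {k : realFieldType} {X : Type} {lt : X -> X -> Prop} {M : X -> Prop}.
Hypothesis sto_M : sto lt M.

Lemma supp_sub {a b : X -> k} {x} :
  supp (fun x => b x - a x) x -> supp a x \/ supp b x.
Proof.
rewrite /supp => nz; case: (classic (a x = 0)) => [a0|]; last by left.
by right => b0; apply: nz; rewrite a0 b0 subrr.
Qed.

Lemma split_nz {a b c : X -> k} {y} :
  c y - a y <> 0 -> c y - b y <> 0 \/ b y - a y <> 0.
Proof.
move=> nz; case: (classic (c y - b y = 0)) => [cb|]; last by left.
by right => ba; apply: nz; lra.
Qed.

Lemma anti_wo_union (S1 S2 : X -> Prop) :
  (forall x, S1 x -> M x) -> (forall x, S2 x -> M x) ->
  anti_wo lt S1 -> anti_wo lt S2 -> anti_wo lt (fun x => S1 x \/ S2 x).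
Proof.
have [_ tr tri] := sto_M.
move=> M1 M2 w1 w2 A sA [x0 Ax0].
case: (classic (exists x, A x /\ S1 x)) => E1;
case: (classic (exists x, A x /\ S2 x)) => E2.
- have [m1 [[Am1 S1m1] mx1]] := w1 (fun x => A x /\ S1 x) (fun x h => h.2) E1.
  have [m2 [[Am2 S2m2] mx2]] := w2 (fun x => A x /\ S2 x) (fun x h => h.2) E2.
  case: (tri m1 m2 (M1 _ S1m1) (M2 _ S2m2)) => [eq_m|l|l].
  + by subst m2; exists m1; split => // x Ax; case: (sA x Ax) => Sx; [apply: mx1|apply: mx2].
  + exists m2; split => // x Ax; case: (sA x Ax) => Sx; last by apply: mx2.
    by move=> l2; apply: (mx1 x) => //; apply: (tr _ _ _ (M1 _ S1m1) (M2 _ S2m2) (M1 _ Sx)).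
  + exists m1; split => // x Ax; case: (sA x Ax) => Sx; first by apply: mx1.
    by move=> l2; apply: (mx2 x) => //; apply: (tr _ _ _ (M2 _ S2m2) (M1 _ S1m1) (M2 _ Sx)).
- have [m1 [[Am1 S1m1] mx1]] := w1 (fun x => A x /\ S1 x) (fun x h => h.2) E1.
  exists m1; split => // x Ax; case: (sA x Ax) => Sx; first by apply: mx1.
  by exfalso; apply: E2; exists x.
- have [m2 [[Am2 S2m2] mx2]] := w2 (fun x => A x /\ S2 x) (fun x h => h.2) E2.
  exists m2; split => // x Ax; case: (sA x Ax) => Sx; last by apply: mx2.
  by exfalso; apply: E1; exists x.
- by exfalso; case: (sA x0 Ax0) => Sx; [apply: E1|apply: E2]; exists x0.
Qed.

Context {S : X -> Prop}.
Hypothesis SM : forall x, S x -> M x.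

Lemma hlt_irr (a : X -> k) : ~ hlt lt a a.
Proof. by move=> [x [[nz _] _]]; apply: nz; rewrite subrr. Qed.

(* Transitivity of the Hahn order: the valuation of c - a is the larger of
   the valuations of c - b and b - a (or their common value). *)
Lemma hlt_trans (a b c : X -> k) :
  hahn_in lt S a -> hahn_in lt S b -> hahn_in lt S c ->
  hlt lt a b -> hlt lt b c -> hlt lt a c.
Proof.
have [_ tr tri] := sto_M.
move=> [_ sa] [_ sb] [_ sc] [m1 [[nz1 mx1] p1]] [m2 [[nz2 mx2] p2]].
have Mm1 : M m1 by case: (supp_sub nz1) => h; apply: SM; [apply: sa|apply: sb].
have Mm2 : M m2 by case: (supp_sub nz2) => h; apply: SM; [apply: sb|apply: sc].
case: (tri m1 m2 Mm1 Mm2) => [eq_m|l|l].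
- subst m2; exists m1; split; last by lra.
  split; first by lra.
  by move=> y /(split_nz (b:=b)) [h|h]; [exact: mx2|exact: mx1].
- have ba0 : b m2 - a m2 = 0 by apply: NNPP => h; exact: (mx1 _ h l).
  exists m2; split; last by lra.
  split; first by lra.
  move=> y /(split_nz (b:=b)) [h|h]; first exact: mx2.
  have My : M y by case: (supp_sub h) => h'; apply: SM; [apply: sa|apply: sb].
  by move=> l2; apply: (mx1 y h); exact: (tr _ _ _ Mm1 Mm2 My l l2).
- have cb0 : c m1 - b m1 = 0 by apply: NNPP => h; exact: (mx2 _ h l).
  exists m1; split; last by lra.
  split; first by lra.
  move=> y /(split_nz (b:=b)) [h|h]; last exact: mx1.
  have My : M y by case: (supp_sub h) => h'; apply: SM; [apply: sb|apply: sc].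
  by move=> l2; apply: (mx2 y h); exact: (tr _ _ _ Mm2 Mm1 My l l2).
Qed.

(* Totality: b - a is zero or has a valuation, where its sign decides. *)
Lemma hlt_total (a b : X -> k) :
  hahn_in lt S a -> hahn_in lt S b -> [\/ a = b, hlt lt a b | hlt lt b a].
Proof.
move=> [wa sa] [wb sb].
case: (classic (exists x, b x - a x <> 0)) => E; last first.
  apply: Or31; apply: functional_extensionality => x.
  by apply: NNPP => h; apply: E; exists x => h2; apply: h; lra.
have w := anti_wo_union _ _ (fun x h => SM _ (sa x h)) (fun x h => SM _ (sb x h)) wa wb.
have [m [nzm mx]] := w (supp (fun x => b x - a x)) (fun x h => supp_sub h) E.
have : b m - a m != 0 by apply/eqP.
rewrite neq_lt => /orP [neg|pos]; last by apply: Or32; exists m.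
apply: Or33; exists m; split; last by lra.
split; first by lra.
by move=> y nzy; apply: mx; rewrite /supp => h; apply: nzy; lra.
Qed.

Lemma hlt_sto : sto (@hlt k _ lt) (@hahn_in k _ lt S).
Proof. by split; [exact: hlt_irr|exact: hlt_trans|exact: hlt_total]. Qed.

Lemma hahn_zero : hahn_in lt S (fun _ => (0 : k)).
Proof. by split => [A sA [x Ax]|x h]; exfalso; [apply: (sA x Ax)|apply: h]. Qed.

(* (3) If f(x) < x on S, then push f c < c for every positive c in k((S)):
   the valuation of c is not in the image of the support of push f c. *)
Lemma push_contracts (f : X -> X) (c : X -> k) :
  (forall x, S x -> M (f x)) -> (forall x, S x -> lt (f x) x) ->
  hahn_in lt S c -> hlt lt (fun _ => 0) c -> hlt lt (push f c) c.
Proof.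
have [_ tr _] := sto_M.
move=> fM contr [_ sc] [m [[nz mx] p]].
have cm : c m <> 0 by move=> h; apply: nz; rewrite h subr0.
have push_m : push f c m = 0.
  apply: NNPP => /push_nz [x [ex h]]; apply: (mx x); first by rewrite subr0.
  by rewrite -ex; apply: contr; apply: sc.
exists m; split; last by rewrite push_m; move: p; rewrite !subr0.
split; first by rewrite push_m.
move=> y /(split_nz (b:=fun _ => 0)) [h|h]; first exact: mx.
have /push_nz [x [<- hx]] : push f c y <> 0 by move=> e; apply: h; rewrite e subr0.
have Sx := sc _ hx.
move=> l; apply: (mx x); first by rewrite subr0.
exact: (tr _ _ _ (SM _ (sc _ cm)) (fM _ Sx) (SM _ Sx) l (contr _ Sx)).
Qed.

End HahnOrder.

Section HahnTransport.
Context {k : realFieldType} {X Y : Type} {ltX : X -> X -> Prop} {ltY : Y -> Y -> Prop}.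

Lemma hpos_push (f : X -> Y) M (c : X -> k) :
  injective f -> reflects ltX ltY f M -> (forall x, supp c x -> M x) ->
  hpos ltX c -> hpos ltY (push f c).
Proof.
move=> f_inj rf sc [m [[nz mx] p]]; exists (f m); rewrite /is_val (pushE _ _ _ f_inj).
split=> //; split=> // y /push_nz [x [<- hx]] l.
by apply: (mx x hx); apply: rf => //; apply: sc.
Qed.

Lemma hlt_push (f : X -> Y) M (a b : X -> k) :
  injective f -> reflects ltX ltY f M -> (forall x, supp a x -> M x) ->
  (forall x, supp b x -> M x) ->
  hlt ltX a b -> hlt ltY (push f a) (push f b).
Proof.
move=> f_inj rf sa sb lt_ab; rewrite /hlt -push_sub.
by apply: (hpos_push _ M _ f_inj rf _ lt_ab) => x /supp_sub [h|h]; [exact: sa|exact: sb].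
Qed.

Lemma hahn_push (f : X -> Y) (S : X -> Prop) (S' : Y -> Prop) (c : X -> k) :
  injective f -> reflects ltX ltY f S -> (forall x, S x -> S' (f x)) ->
  hahn_in ltX S c -> hahn_in ltY S' (push f c).
Proof.
move=> f_inj rf fS [w sc]; split; last first.
  by move=> y /push_nz [x [<- h]]; apply: fS; apply: sc.
move=> A sA [y0 Ay0].
have [x0 [ex0 _]] := push_nz (sA _ Ay0).
have sA' : forall x, A (f x) -> supp c x by move=> x /sA; rewrite /supp (pushE _ _ _ f_inj).
have [m [Am mx]] := w (fun x => A (f x)) sA' (ex_intro _ x0 (eq_ind_r A Ay0 ex0)).
exists (f m); split => // y Ay.
have [x [ex _]] := push_nz (sA _ Ay); subst y.
by move=> l; apply: (mx x Ay); apply: rf => //; apply: sc; apply: sA'.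
Qed.

Lemma push_embedding {M M' S S'} {f : X -> Y} :
  sto ltX M -> sto ltY M' -> order_embedding ltX ltY M M' f ->
  (forall x, S x -> M x) -> (forall x, S x -> S' (f x)) ->
  order_embedding (@hlt k _ ltX) (@hlt k _ ltY) (hahn_in ltX S) (hahn_in ltY S') (push f).
Proof.
move=> stoX stoY emb SM fS; have [f_inj _ _] := emb.
have rf := embedding_reflects stoX stoY emb.
split; first exact: push_inj.
  by move=> c; apply: hahn_push => // x y Sx Sy; apply: rf; apply: SM.
move=> a b [_ sa] [_ sb]; apply: (hlt_push _ M _ _ f_inj rf) => x h; apply: SM.
  exact: sa.
exact: sb.
Qed.

End HahnTransport.

Section Tower.
Variables (d : Order.disp_t) (Gam : orderType d) (sigma : Gam -> Gam).
Hypothesis sigma_mono : forall a b : Gam, (a < b)%O -> (sigma a < sigma b)%O.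
Hypothesis sigma_lt : forall g : Gam, (sigma g < g)%O.
Variable k : realFieldType.

Notation L n := (lt_n k Gam n).
Notation Mm n := (mem_n k Gam n).
Notation one n := (one_n k Gam n).
Notation P n := (psi_n k Gam sigma n).
Notation Gam_lt := (fun a b : Gam => (a < b)%O).
Notation Gt1 n := (fun t => Mm n t /\ L n (one n) t).

Lemma sto_Gam : sto Gam_lt (fun _ => True).
Proof.
split=> [x|x y z _ _ _|x y _ _]; first by rewrite ltxx.
  exact: lt_trans.
by case: (ltgtP x y) => h; [apply: Or32|apply: Or33|apply: Or31].
Qed.

Lemma sto_n n : sto (L n) (Mm n).
Proof.
elim: n => [|n IH]; first exact: (hlt_sto sto_Gam (fun _ _ => I)).
exact: (@hlt_sto _ _ _ _ IH (Gt1 n) (fun x h => h.1)).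
Qed.

Lemma one_mem n : Mm n (one n).
Proof. by case: n => [|n]; apply: hahn_zero. Qed.

Lemma lift_embedding {n m : nat} {f : T k Gam n -> T k Gam m} :
  order_embedding (L n) (L m) (Mm n) (Mm m) f -> f (one n) = one m ->
  order_embedding (L n.+1) (L m.+1) (Mm n.+1) (Mm m.+1) (push f).
Proof.
move=> emb f1; apply: (push_embedding (S := Gt1 n) (S' := Gt1 m) (sto_n n) (sto_n m) emb) => [t [] //|t [Mt gt1]].
have [_ fM mono] := emb; split; first exact: fM.
by rewrite -f1; apply: mono => //; exact: one_mem.
Qed.

Lemma sigma_inj : injective sigma.
Proof. exact: inc_inj (le_mono sigma_mono). Qed.

Lemma psi_one n : P n (one n) = one n.
Proof. by case: n => [|n]; apply: push_zero. Qed.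

Lemma psi_embedding n : order_embedding (L n) (L n) (Mm n) (Mm n) (P n).
Proof.
elim: n => [|n IH]; last exact: (lift_embedding IH (psi_one n)).
have sigma_emb : order_embedding Gam_lt Gam_lt (fun _ => True) (fun _ => True) sigma.
  by split=> [|//|x y _ _]; [exact: sigma_inj|exact: sigma_mono].
exact: (push_embedding sto_Gam sto_Gam sigma_emb).
Qed.

Lemma psi_inj n : injective (P n).
Proof. by have [] := psi_embedding n. Qed.

Lemma psi_contracts n g : Mm n g -> L n (one n) g -> L n (P n g) g.
Proof.
elim: n g => [|n IH] g.
  exact: (push_contracts (S := fun _ => True) sto_Gam (fun _ _ => I) sigma g (fun _ _ => I) (fun x _ => sigma_lt x)).
have [_ psiM _] := psi_embedding n.
exact: (push_contracts (S := Gt1 n) (sto_n n) (fun x h => h.1) (P n) g (fun x h => psiM x h.1)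
  (fun x h => IH x h.1 h.2)).
Qed.

Lemma xmon_inj : injective (@xmon k Gam).
Proof.
move=> a b e; have := congr1 (fun f => f a) e; rewrite /xmon eqxx.
by case: eqP => // _ /eqP; rewrite oner_eq0.
Qed.

Lemma xmon_mem g : Mm 0 (@xmon k Gam g).
Proof.
split => // A sA [x Ax]; exists g.
have eg : forall y, A y -> y = g.
  by move=> y /sA; rewrite /supp /xmon; case: eqP => // _; rewrite eqxx.
split; first by rewrite -(eg x Ax).
by move=> y /eg ->; rewrite ltxx.
Qed.

Lemma xmon_mono a b : (a < b)%O -> L 0 (@xmon k Gam a) (@xmon k Gam b).
Proof.
move=> l; have nab : (b == a) = false by apply/eqP => e; move: l; rewrite e ltxx.
exists b; split; [split|]; last by rewrite /= /xmon eqxx nab subr0 ltr01.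
  by rewrite /= /xmon eqxx nab subr0; apply/eqP; exact: oner_neq0.
move=> y; rewrite /xmon; case: (eqVneq y b) => [->|nb]; first by rewrite ltxx.
case: (eqVneq y a) => [->|na]; first by move=> _ /(lt_trans l); rewrite ltxx.
by rewrite subrr.
Qed.

Lemma xmon_gt1 g : L 0 (one 0) (@xmon k Gam g).
Proof.
exists g; split; last by rewrite /xmon eqxx subr0 ltr01.
split; first by rewrite /xmon eqxx subr0; apply/eqP; exact: oner_neq0.
by move=> y; rewrite /xmon; case: eqP => [->|_]; [rewrite ltxx|rewrite subr0].
Qed.

(* The preimage maps pre_n : G^{#n} -> G^{#(n+1)}: at level 0,
   prod x_g^{a(g)} |-> e(sum a(g) x_g), then lifted by pushforward. *)
Fixpoint pre (n : nat) : T k Gam n -> T k Gam n.+1 :=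
  match n return T k Gam n -> T k Gam n.+1 with
  | 0 => push (@xmon k Gam)
  | n.+1 => push (pre n)
  end.

Lemma pre_one n : pre n (one n) = one n.+1.
Proof. by case: n => [|n]; apply: push_zero. Qed.

Lemma pre_embedding n : order_embedding (L n) (L n.+1) (Mm n) (Mm n.+1) (pre n).
Proof.
elim: n => [|n IH]; last exact: (lift_embedding IH (pre_one n)).
have xmon_emb : order_embedding Gam_lt (L 0) (fun _ => True) (Mm 0) (@xmon k Gam).
  by split=> [|x _|x y _ _]; [exact: xmon_inj|exact: xmon_mem|exact: xmon_mono].
apply: (push_embedding sto_Gam (sto_n 0) xmon_emb) => // x _.
by split; [exact: xmon_mem|exact: xmon_gt1].
Qed.


(* The key identity psi^{#(n+1)} o pre_n = l^{#n}; at level 0 it is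
   push sigma (x_g) = x_(sigma g), i.e. psi_sigma(x_g) = x_(sigma g). *)
Lemma psi_pre n t : P n.+1 (pre n t) = l_n k Gam sigma n t.
Proof.
elim: n t => [|n IH] t /=.
  rewrite push_comp; [|exact: (push_inj _ sigma_inj)|exact: xmon_inj].
  by congr push; apply: functional_extensionality => x; exact: push_xmon sigma_inj.
rewrite push_comp; [|exact: (psi_inj n.+1)|by have [] := pre_embedding n].
by congr push; apply: functional_extensionality.
Qed.

Lemma psi_EL_surjective n (a : T k Gam n -> k) : hahn_in (L n) (Mm n) a ->
  exists j (b : T k Gam (Nat.add j n) -> k),
    hahn_in (L (Nat.add j n)) (Mm (Nat.add j n)) b /\
    push (P (Nat.add j n)) b = push (emb k Gam sigma n j) a.
Proof.
move=> ha; exists 1%N, (push (pre n) a).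
have pre_emb := pre_embedding n; have [pre_inj preM _] := pre_emb.
have [_ pushM _] := push_embedding (k:=k) (S := Mm n) (S' := Mm n.+1)
  (sto_n n) (sto_n n.+1) pre_emb (fun _ h => h) preM.
split; first exact: pushM.
change (push (P n.+1) (push (pre n) a) = push (l_n k Gam sigma n) a).
rewrite push_comp; [|exact: psi_inj|exact: pre_inj].
by congr push; apply: functional_extensionality => x; exact: psi_pre.
Qed.

(* psi_sigma commutes with l_sigma: both sides send x_g to x_(sigma^2 g). *)
Lemma psi_commutes_lsig g :
  push (P 0) (l_n k Gam sigma 0 g) = l_n k Gam sigma 0 (P 0 g).
Proof.
have xs_inj : injective (fun g : Gam => @xmon k Gam (sigma g)).
  by move=> a b /xmon_inj /sigma_inj.
rewrite /= /lsig push_comp; [|exact: (push_inj _ sigma_inj)|exact: xs_inj].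
rewrite push_comp; [|exact: xs_inj|exact: sigma_inj].
by congr push; apply: functional_extensionality => x; exact: push_xmon sigma_inj.
Qed.

End Tower.

Theorem mainTheorem14 (d : Order.disp_t) (Gam : orderType d) (sigma : Gam -> Gam)
  (sigma_mono : forall a b : Gam, (a < b)%O -> (sigma a < sigma b)%O)
  (sigma_lt : forall g : Gam, (sigma g < g)%O)
  (k : realFieldType) (log : k -> k)
  (log_mul : forall a b : k, 0 < a -> 0 < b -> log (a * b) = log a + log b)
  (log_mono : forall a b : k, 0 < a -> a < b -> log a < log b)
  (log_surj : forall y : k, exists a : k, 0 < a /\ log a = y) :
  let G := mem_n k Gam 0 in
  let psi := psi_n k Gam sigma 0 in
  (* psi_sigma is an order-preserving group embedding G -> G ... *)
  ((forall g, G g -> G (psi g)) /\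
   (forall g h, G g -> G h -> psi (mul_n k Gam 0 g h) = mul_n k Gam 0 (psi g) (psi h)) /\
   (forall g h, G g -> G h -> lt_n k Gam 0 g h -> lt_n k Gam 0 (psi g) (psi h)) /\
  (* ... commuting with l_sigma (a morphism of (k((G)), l_sigma)) ... *)
   (forall g, G g -> push psi (l_n k Gam sigma 0 g) = l_n k Gam sigma 0 (psi g))) /\
  (* ... which is contracting *)
  (forall g, G g -> lt_n k Gam 0 (one_n k Gam 0) g -> lt_n k Gam 0 (psi g) g) /\
  (* psi^EL is a contraction on G^EL = U_n G^{#n} *)
  (forall n (g : T k Gam n), mem_n k Gam n g -> lt_n k Gam n (one_n k Gam n) g ->
      lt_n k Gam n (psi_n k Gam sigma n g) g) /\
  (* psi^EL is surjective on k((G))^{EL} = U_n k((G^{#n})) *)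
  (forall n (a : T k Gam n -> k), hahn_in (lt_n k Gam n) (mem_n k Gam n) a ->
      exists j (b : T k Gam (Nat.add j n) -> k),
        hahn_in (lt_n k Gam (Nat.add j n)) (mem_n k Gam (Nat.add j n)) b /\
        push (psi_n k Gam sigma (Nat.add j n)) b = push (emb k Gam sigma n j) a).
Proof.
move=> G psi; rewrite /G /psi; have [_ psiM psi_mono] := psi_embedding _ _ _ sigma_mono k 0.
split; [split; [|split; [|split]]|split; [|split]].
- exact: psiM.
- by move=> g h _ _; exact: push_add.
- exact: psi_mono.
- by move=> g _; exact: (psi_commutes_lsig _ _ _ sigma_mono).
- exact: (psi_contracts _ _ _ sigma_mono sigma_lt).
- move=> n; exact: (psi_contracts _ _ _ sigma_mono sigma_lt).
- move=> n; exact: (psi_EL_surjective _ _ _ sigma_mono).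
Qed.
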